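(* Let $n>1$ and $m$ be integers with $0<m<n$. Then $$\left|\mathcal{F}(n,m)\right|=|\mathcal{F}_{n-m}^m|+|\mathcal{F}^{n-m}_m|-1,$$ and $$\left|\mathcal{F}(n,m)\right|-2=\sum_{d\geq1}\overline{\mu}(d)\cdot\left\lfloor\tfrac md\right\rfloor\cdot\left\lfloor\tfrac{n-m}{d}\right\rfloor .$$ In particular, for every positive integer $t$, $$\sum_{d\geq1}\overline{\mu}(d)\cdot\left\lfloor\tfrac td\right\rfloor^2=\left|\mathcal{F}(2t,t)\right|-2=2\left|\mathcal{F}_t\right|-3 .$$
   Context: For an integer $N\geq 1$, the Farey sequence $\mathcal{F}_N$ is the ascending sequence of irreducible fractions $\tfrac hk$ (with $h\ge0$, $k\ge1$, $\gcd(h,k)=1$) such that $\tfrac01\leq\tfrac hk\leq\tfrac11$ and $1\leq k\leq N$. For integers $N\ge1$ and $M$, $\mathcal{F}_N^M:=\left(\tfrac hk\in\mathcal{F}_N:\ h\leq M\right)$. For $0<m<n$, $\mathcal{F}(n,m):=\left(\tfrac hk\in\mathcal{F}_n:\ h\leq m,\ k-h\leq n-m\right)$ (the Farey subsequence associated with an element of rank $m$ in the Boolean lattice of rank $n$). $\overline{\mu}$ denotes the number-theoretic Möbius function, and $|\cdot|$ denotes the number of terms of a sequence. *)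

From mathcomp Require Import all_boot all_order all_algebra.
Set Implicit Arguments. Unset Strict Implicit. Unset Printing Implicit Defensive.
Import GRing.Theory Num.Theory.

(* A fraction h/k of [0,1] is represented by the pair (h, k) of naturals. *)

Definition farey (N : nat) : seq (nat * nat) :=
  [seq p <- [seq (h, k) | k <- iota 1 N, h <- iota 0 k.+1] | coprime p.1 p.2].

Definition fareyM (N M : nat) : seq (nat * nat) :=
  [seq p <- farey N | p.1 <= M].

Definition fareyB (n m : nat) : seq (nat * nat) :=
  [seq p <- farey n | (p.1 <= m) && (p.2 - p.1 <= n - m)].

(* Number-theoretic Moebius function (mu 0 := 0 by convention; unused). *)
Definition moebius (d : nat) : int :=
  (if d == 0 then 0
  else if all (fun p => logn p d == 1) (primes d)
       then (-1) ^+ size (primes d) else 0)%R.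

(* A fraction h/k of F(a+b, a) is the same as a coprime pair (h, k - h) of the
   grid [0, a] x [0, b].  Pairs with h <= j are exactly the fractions h/j of
   F_b^a, and transposing the pairs with h >= j gives F_a^b; the two families
   share only (1, 1).  Besides (0, 1) and (1, 0), the coprime pairs of the grid
   lie in [1, a] x [1, b], where Moebius inversion
   [gcd(h, j) = 1] = sum_(d | h, d | j) mu(d) counts them as
   sum_d mu(d) (a / d) (b / d).  For a = b = t the two Farey subsequences are
   both F_t. *)

From mathcomp Require Import all_boot all_order all_algebra.
From mathcomp Require Import zify.
Import GRing.Theory Num.Theory.
Set Implicit Arguments. Unset Strict Implicit. Unset Printing Implicit Defensive.

Lemma moebius_sq_dvd p d : prime p -> 0 < d -> p ^ 2 %| d -> moebius d = 0%R.
Proof.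
move=> p_pr d_gt0 p2d; rewrite /moebius ifN ?gtn_eqF //.
have pd : p %| d by apply: dvdn_trans p2d; rewrite (expnS p 1) dvdn_mulr.
case: ifP => // /allP /(_ p); rewrite mem_primes p_pr d_gt0 pd => /(_ isT) /eqP.
by move: p2d; rewrite pfactor_dvdn //; lia.
Qed.

Lemma moebius_primeM p s : prime p -> 0 < s -> ~~ (p %| s) ->
  moebius (p * s) = (- moebius s)%R.
Proof.
move=> p_pr s_gt0 p_ndvd_s; have p_gt0 := prime_gt0 p_pr.
have cop_ps : coprime p s by rewrite prime_coprime.
have primes_ps : perm_eq (primes (p * s)) (p :: primes s).
  apply: uniq_perm; rewrite ?primes_uniq //=.
    by rewrite primes_uniq mem_primes (negbTE p_ndvd_s) !andbF.
  by move=> q; rewrite primesM // in_cons primes_prime // mem_seq1.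
rewrite /moebius muln_eq0 (gtn_eqF p_gt0) (gtn_eqF s_gt0) /=.
rewrite (perm_all _ primes_ps) (perm_size primes_ps) /=.
rewrite lognM // logn_prime // eqxx (logn_coprime cop_ps) /=.
rewrite (@eq_in_all _ _ (fun q => logn q s == 1)); last first.
  move=> q; rewrite mem_primes => /and3P [q_pr _ qs].
  have /negPf qp : q != p by apply: contraNneq p_ndvd_s => <-.
  by rewrite lognM // logn_prime // qp.
by case: ifP => _; rewrite ?oppr0 // exprS mulN1r.
Qed.

Lemma perm_p2free_divisors p r e : prime p -> coprime p r -> 0 < r -> 0 < e ->
  perm_eq [seq d <- divisors (r * p ^ e) | ~~ (p ^ 2 %| d)]
          (divisors r ++ map (muln p) (divisors r)).
Proof.
move=> p_pr cop_pr r_gt0 e_gt0; have p_gt0 := prime_gt0 p_pr.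
have g_gt0 : 0 < r * p ^ e by rewrite muln_gt0 r_gt0 expn_gt0 p_gt0.
have p_ndvd s : s %| r -> ~~ (p %| s).
  move=> sr; apply: contraL cop_pr => ps.
  by rewrite prime_coprime // negbK (dvdn_trans ps sr).
have dvd_r k d : coprime d p -> d %| r * p ^ k -> d %| r.
  by move=> cop_dp; rewrite Gauss_dvdl // coprimeXr.
apply: uniq_perm.
- by rewrite filter_uniq // divisors_uniq.
- rewrite cat_uniq divisors_uniq map_inj_uniq ?divisors_uniq; last first.
    by move=> x y /eqP; rewrite eqn_pmul2l // => /eqP.
  rewrite andbT /=; apply/hasPn => x /mapP [s]; rewrite -dvdn_divisors // => sr ->.
  rewrite -dvdn_divisors //; apply: contra (p_ndvd _ (dvdnn r)).
  exact/dvdn_trans/dvdn_mulr.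
move=> d; rewrite mem_filter mem_cat -!dvdn_divisors //; apply/andP/orP.
- move=> [np2d dg].
  have [pd|npd] := boolP (p %| d); last first.
    by left; apply: (dvd_r e) dg; rewrite coprime_sym prime_coprime.
  right; apply/mapP; exists (d %/ p); last by rewrite mulnC divnK.
  have npdp : ~~ (p %| d %/ p).
    apply: contra np2d => pdp.
    by rewrite -(divnK pd) (expnS p 1) expn1 mulnC dvdn_pmul2l.
  rewrite -dvdn_divisors //; apply: (dvd_r e.-1); first by rewrite coprime_sym prime_coprime.
  rewrite -(dvdn_pmul2l p_gt0) (mulnC p (d %/ p)) divnK // mulnCA -expnS prednK //.
- case=> [dr|/mapP [s]].
    split; last by rewrite dvdn_mulr.
    by apply: contra (p_ndvd _ dr); apply: dvdn_trans; rewrite (expnS p 1) dvdn_mulr.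
  rewrite -dvdn_divisors // => sr ->; split.
    by rewrite expnS expn1 dvdn_pmul2l // p_ndvd.
  by rewrite -(prednK e_gt0) expnS mulnCA dvdn_pmul2l // dvdn_mulr.
Qed.

Lemma sum_moebius_divisors g : 0 < g ->
  (\sum_(d <- divisors g) moebius d)%R = (g == 1)%:R%R.
Proof.
move=> g_gt0; have [->|g_neq1] := eqVneq g 1; first by rewrite big_seq1.
have p_pr : prime (pdiv g) by rewrite pdiv_prime // ltn_neqAle eq_sym g_neq1.
have [r cop_pr g_def] := pfactor_coprime p_pr g_gt0.
set p := pdiv g in p_pr cop_pr g_def; set e := logn p g in g_def.
have e_gt0 : 0 < e by rewrite logn_gt0 mem_primes p_pr g_gt0 pdiv_dvd.
have r_gt0 : 0 < r by move: g_gt0; rewrite g_def muln_gt0 => /andP [].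
(* Divisors divisible by p^2 contribute 0; the others pair off as s and p s,
   with opposite signs. *)
rewrite (bigID (fun d => p ^ 2 %| d)) /= big1_seq ?add0r; last first.
  move=> d /andP [p2d]; rewrite -dvdn_divisors // => dg.
  exact: moebius_sq_dvd p_pr (dvdn_gt0 g_gt0 dg) p2d.
rewrite -big_filter g_def (perm_big _ (perm_p2free_divisors p_pr cop_pr r_gt0 e_gt0)).
rewrite big_cat big_map /= [X in (_ + X)%R](eq_big_seq (fun s => - moebius s)%R) ?sumrN ?addrN // => s.
rewrite -dvdn_divisors // => sr; rewrite moebius_primeM ?(dvdn_gt0 r_gt0 sr) //.
by apply: contraL cop_pr => ps; rewrite prime_coprime // negbK (dvdn_trans ps sr).
Qed.

Section CoprimeCount.
Local Open Scope ring_scope.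

Lemma coprime_sum_moebius N h j : (0 < h <= N)%N ->
  (coprime h j)%:Z = \sum_(1 <= d < N.+1) moebius d * (d %| h)%:Z * (d %| j)%:Z.
Proof.
move=> /andP [h_gt0 h_le_N]; have g_gt0 : (0 < gcdn h j)%N by rewrite gcdn_gt0 h_gt0.
have -> : (coprime h j)%:Z = (gcdn h j == 1)%:R by rewrite /coprime; case: (_ == _).
rewrite -sum_moebius_divisors //.
have divisors_gcd : perm_eq (divisors (gcdn h j))
                            [seq d <- index_iota 1 N.+1 | (d %| gcdn h j)%N].
  apply: uniq_perm; rewrite ?divisors_uniq ?filter_uniq ?iota_uniq // => d.
  rewrite mem_filter -dvdn_divisors // mem_index_iota; case dg: (d %| _)%N => //=.
  have := dvdn_leq g_gt0 dg; have := dvdn_gt0 g_gt0 dg.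
  have := dvdn_leq h_gt0 (dvdn_gcdl h j); lia.
rewrite (perm_big _ divisors_gcd) big_filter big_mkcond /=.
by apply: eq_bigr => d _; rewrite dvdn_gcd; do 2 case: (_ %| _)%N; rewrite ?mulr1 ?mulr0.
Qed.

Lemma sum_coprime_moebius a b N : (a <= N)%N -> (b <= N)%N ->
  (\sum_(1 <= h < a.+1) \sum_(1 <= j < b.+1) coprime h j)%N%:Z
    = \sum_(1 <= d < N.+1) moebius d * (a %/ d)%:Z * (b %/ d)%:Z.
Proof.
move=> a_le_N b_le_N.
rewrite (big_morph Posz PoszD (erefl (0 : int))).
under eq_big_nat => h /andP [h_gt0 h_le_a].
  rewrite (big_morph Posz PoszD (erefl (0 : int))).
  have h_range : (0 < h <= N)%N by lia.
  under eq_bigr do rewrite (coprime_sum_moebius _ h_range).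
  rewrite exchange_big /=.
  over.
rewrite /= exchange_big /=; apply: eq_bigr => d _.
rewrite !divn_count_dvd !(big_morph Posz PoszD (erefl (0 : int))).
by rewrite [moebius d * _]mulr_sumr mulr_suml; apply: eq_bigr => h _; rewrite mulr_sumr.
Qed.

End CoprimeCount.

Lemma sum_eq_uniq (T : eqType) (s : seq T) x : uniq s -> x \in s ->
  \sum_(y <- s) (y == x) = 1.
Proof.
move=> s_uniq sx; transitivity (count_mem x s); last by rewrite count_uniq_mem // sx.
by rewrite -sum1_count [RHS]big_mkcond; reflexivity.
Qed.

Definition coprime_pairs (s t : seq nat) : seq (nat * nat) :=
  [seq p <- [seq (h, j) | h <- s, j <- t] | coprime p.1 p.2].

Lemma mem_coprime_pairs s t p :
  (p \in coprime_pairs s t) = [&& p.1 \in s, p.2 \in t & coprime p.1 p.2].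
Proof.
rewrite mem_filter andbC andbA; case: p => h j /=; congr (_ && _).
apply/allpairsP/andP => [[[x y] [xs yt [-> ->]]] // | [hs jt]].
by exists (h, j).
Qed.

Lemma coprime_pairs_uniq s t : uniq s -> uniq t -> uniq (coprime_pairs s t).
Proof.
move=> s_uniq t_uniq; rewrite filter_uniq // allpairs_uniq //.
by move=> [x y] [x' y'] _ _ [-> ->].
Qed.

Lemma size_coprime_pairs s t :
  size (coprime_pairs s t) = \sum_(h <- s) \sum_(j <- t) coprime h j.
Proof.
rewrite size_filter -sum1_count big_mkcond big_allpairs.
by apply: eq_bigr => h _; apply: eq_bigr => j _; case: coprime.
Qed.

Lemma size_coprime_grid a b : 0 < a -> 0 < b ->
  size (coprime_pairs (iota 0 a.+1) (iota 0 b.+1))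
    = (\sum_(1 <= h < a.+1) \sum_(1 <= j < b.+1) coprime h j).+2.
Proof.
move=> a_gt0 b_gt0; have iota1_1 n : 0 < n -> 1 \in iota 1 n by rewrite mem_iota; lia.
have row0 : \sum_(j <- iota 1 b) coprime 0 j = 1.
  rewrite -[RHS](sum_eq_uniq (iota_uniq 1 b) (iota1_1 b b_gt0)).
  by apply: eq_bigr => j _; rewrite /coprime gcd0n.
have col0 : \sum_(h <- iota 1 a) coprime h 0 = 1.
  rewrite -[RHS](sum_eq_uniq (iota_uniq 1 a) (iota1_1 a a_gt0)).
  by apply: eq_bigr => h _; rewrite /coprime gcdn0.
rewrite size_coprime_pairs /index_iota !subn1 /= !big_cons row0.
under eq_bigr do rewrite big_cons.
by rewrite big_split /= col0; lia.
Qed.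

Lemma mem_farey N p :
  (p \in farey N) = [&& 0 < p.2 <= N, p.1 <= p.2 & coprime p.1 p.2].
Proof.
rewrite mem_filter andbC andbA; case: p => h k; congr (_ && _).
apply/allpairsPdep/idP => [[k' [h' [k'N h'k' [-> ->]]]] | hk].
  by move: k'N h'k'; rewrite !mem_iota /=; lia.
by exists k, h; rewrite !mem_iota; split => //; move: hk => /=; lia.
Qed.

Lemma farey_uniq N : uniq (farey N).
Proof.
rewrite filter_uniq // allpairs_uniq_dep ?iota_uniq // => [k _ | [x y] [x' y'] _ _ [-> ->]] //.
exact: iota_uniq.
Qed.

Lemma mem_fareyM N M p :
  (p \in fareyM N M) = [&& 0 < p.2 <= N, p.1 <= p.2, coprime p.1 p.2 & p.1 <= M].
Proof. by rewrite mem_filter mem_farey andbC !andbA. Qed.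

Lemma fareyM_uniq N M : uniq (fareyM N M).
Proof. by rewrite filter_uniq // farey_uniq. Qed.

Lemma mem_fareyB n m p : (p \in fareyB n m) =
  [&& 0 < p.2 <= n, p.1 <= p.2, coprime p.1 p.2, p.1 <= m & p.2 - p.1 <= n - m].
Proof. by rewrite mem_filter mem_farey andbC !andbA. Qed.

Lemma fareyB_uniq n m : uniq (fareyB n m).
Proof. by rewrite filter_uniq // farey_uniq. Qed.

Lemma fareyM_id N : fareyM N N = farey N.
Proof.
apply/all_filterP/allP => p; rewrite mem_farey => /and3P [/andP [_ kN] hk _].
exact: leq_trans hk kN.
Qed.

Lemma coprime_addl h j : coprime h (h + j) = coprime h j.
Proof. by rewrite /coprime gcdnDl. Qed.

Lemma coprime_addn_gt0 h j : coprime h j -> 0 < h + j.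
Proof. by case: h j => [|h] [|j]. Qed.

Lemma size_fareyB_grid a b :
  size (fareyB (a + b) a) = size (coprime_pairs (iota 0 a.+1) (iota 0 b.+1)).
Proof.
set G := coprime_pairs _ _.
have mem_G p : (p \in G) = [&& p.1 <= a, p.2 <= b & coprime p.1 p.2].
  by rewrite mem_coprime_pairs !mem_iota.
rewrite -[RHS](size_map (fun p => (p.1, p.1 + p.2))); apply/perm_size/uniq_perm.
- exact: fareyB_uniq.
- by rewrite map_inj_uniq ?coprime_pairs_uniq ?iota_uniq // => -[h j] [h' j'] [-> /addnI ->].
move=> [h k]; rewrite mem_fareyB /=; apply/idP/mapP => [| [[h' j]]].
  move=> /and5P [/andP [k_gt0 kn] hk cop ha kh]; exists (h, k - h); last by rewrite /= subnKC.
  by rewrite mem_G /= -coprime_addl subnKC // cop; lia.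
rewrite mem_G /= => /and3P [h'a jb cop] [-> ->].
by have := coprime_addn_gt0 cop; rewrite coprime_addl addKn cop; lia.
Qed.

Lemma size_grid_fareyM a b : 0 < a -> 0 < b ->
  size (coprime_pairs (iota 0 a.+1) (iota 0 b.+1)) + 1
    = size (fareyM b a) + size (fareyM a b).
Proof.
move=> a_gt0 b_gt0; set G := coprime_pairs _ _.
have G_uniq : uniq G by apply: coprime_pairs_uniq; apply: iota_uniq.
have mem_G p : (p \in G) = [&& p.1 <= a, p.2 <= b & coprime p.1 p.2].
  by rewrite mem_coprime_pairs !mem_iota.
rewrite -(count_predC (fun p : nat * nat => p.1 <= p.2) G).
rewrite -(count_predC (fun p : nat * nat => p.1 < p.2) (fareyM a b)) -!size_filter.
have below : perm_eq [seq p <- G | p.1 <= p.2] (fareyM b a).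
  apply: uniq_perm; [exact: filter_uniq | exact: fareyM_uniq | move=> [h j]].
  rewrite mem_filter mem_G mem_fareyM /=.
  by case cop: (coprime h j); rewrite ?andbF //= !andbT; have := coprime_addn_gt0 cop; lia.
have above : perm_eq [seq (p.2, p.1) | p <- [seq p <- G | ~~ (p.1 <= p.2)]]
                     [seq p <- fareyM a b | p.1 < p.2].
  apply: uniq_perm; [|exact: filter_uniq _ (fareyM_uniq _ _)|move=> [j h]].
    by rewrite map_inj_in_uniq ?(filter_uniq _ G_uniq) // => -[x y] [x' y'] _ _ [-> ->].
  rewrite mem_filter mem_fareyM /=; apply/mapP/idP.
    move=> [[h' j']]; rewrite mem_filter mem_G /= => /and4P [jh ha jb cop] [-> ->].
    by rewrite coprime_sym cop /=; lia.
  move=> /andP [jh /and4P [/andP [h_gt0 ha] _ cop jb]]; exists (h, j) => //.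
  by rewrite mem_filter mem_G /= coprime_sym cop; lia.
have diagonal : [seq p <- fareyM a b | ~~ (p.1 < p.2)] = [:: (1, 1)].
  apply/perm_small_eq => //.
  apply: uniq_perm; [exact: filter_uniq _ (fareyM_uniq _ _) | by [] | move=> [h k]].
  rewrite mem_filter mem_fareyM mem_seq1 /=; apply/idP/eqP => [|[-> ->]].
    move=> /andP [kh /and4P [/andP [k_gt0 _] hk cop _]]; have hk_eq : h = k by lia.
    by move: cop; rewrite hk_eq /coprime gcdnn => /eqP ->.
  by rewrite coprime1n; lia.
by rewrite (perm_size below) diagonal -(perm_size above) size_map addnA.
Qed.

Local Open Scope ring_scope.

Lemma size_fareyB_fareyM a b : (0 < a)%N -> (0 < b)%N ->
  (size (fareyB (a + b) a))%:Z = (size (fareyM b a))%:Z + (size (fareyM a b))%:Z - 1.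
Proof.
by move=> a_gt0 b_gt0; rewrite size_fareyB_grid -PoszD -size_grid_fareyM // PoszD addrK.
Qed.

Lemma size_fareyB_moebius a b N : (0 < a)%N -> (0 < b)%N -> (a <= N)%N -> (b <= N)%N ->
  (size (fareyB (a + b) a))%:Z - 2
    = \sum_(1 <= d < N.+1) moebius d * (a %/ d)%:Z * (b %/ d)%:Z.
Proof.
move=> a_gt0 b_gt0 a_le_N b_le_N.
by rewrite size_fareyB_grid size_coprime_grid // -addn2 PoszD addrK (sum_coprime_moebius a_le_N b_le_N).
Qed.

Theorem mainTheorem4 :
  (forall n m : nat, (1 < n)%N -> (0 < m)%N -> (m < n)%N ->
     (size (fareyB n m))%:Z =
       (size (fareyM (n - m) m))%:Z + (size (fareyM m (n - m)))%:Z - 1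
   /\ (size (fareyB n m))%:Z - 2 =
       \sum_(1 <= d < n.+1) moebius d * (m %/ d)%:Z * ((n - m) %/ d)%:Z)
  /\
  (forall t : nat, (0 < t)%N ->
     \sum_(1 <= d < t.+1) moebius d * ((t %/ d)%:Z) ^+ 2
       = (size (fareyB (2 * t) t))%:Z - 2
   /\ (size (fareyB (2 * t) t))%:Z - 2 = 2 * (size (farey t))%:Z - 3).
Proof.
split=> [n m _ m_gt0 lt_mn | t t_gt0].
  have nm_gt0 : (0 < n - m)%N by rewrite subn_gt0.
  have -> : fareyB n m = fareyB (m + (n - m)) m by rewrite subnKC // ltnW.
  split; first exact: size_fareyB_fareyM.
  by apply: size_fareyB_moebius; rewrite // ?leq_subr // ltnW.
have -> : fareyB (2 * t) t = fareyB (t + t) t by rewrite addnn -mul2n.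
split.
  rewrite (size_fareyB_moebius t_gt0 t_gt0 (leqnn t) (leqnn t)).
  by apply: eq_bigr => d _; rewrite expr2 mulrA.
by rewrite size_fareyB_fareyM // fareyM_id -addrA -opprD mulrDl mul1r.
Qed.
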